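(* Let $\mathfrak L=\mathbb V\oplus\mathbb W$ be a color gLt-algebra admitting a quasi-multiplicative basis $\mathfrak B=\{e_i\}_{i\in I}$ of $\mathbb W\neq0$. Then $$\mathfrak L=\mathcal U\oplus\Big(\sum_{[i]\in I/\sim}\mathfrak J_{[i]}\Big),$$ where $\mathcal U$ is a linear complement of $\sum_{[i]\in I/\sim}\mathbb V_{[i]}$ in $\mathbb V$ and each $\mathfrak J_{[i]}$ is a color gLt-ideal of $\mathfrak L$ admitting a quasi-multiplicative basis inherited by the one of $\mathfrak L$. Furthermore, $\langle\mathfrak J_{[i]},\mathfrak J_{[h]},\mathfrak L,\dots,\mathfrak L\rangle_\sigma=0$ for every $\sigma\in\mathbb S_n$ whenever $[i]\neq[h]$.
   Context: Let $\mathbb F$ be a field, $\mathbb G$ an abelian group, $n\ge 2$, and $\epsilon:\mathbb G\times\mathbb G\to\mathbb F\setminus\{0\}$ a bicharacter ($\epsilon(k,g+h)=\epsilon(k,g)\epsilon(k,h)$, $\epsilon(g+h,k)=\epsilon(g,k)\epsilon(h,k)$, $\epsilon(g,h)\epsilon(h,g)=1$). A graded $n$-ary algebra is a $\mathbb G$-graded vector space $\mathfrak L=\bigoplus_{g\in\mathbb G}\mathfrak L_g$ with an $n$-linear map $\langle\cdot,\dots,\cdot\rangle:\mathfrak L^n\to\mathfrak L$ such that $\langle\mathfrak L_{g_1},\dots,\mathfrak L_{g_n}\rangle\subset\mathfrak L_{g_1+\dots+g_n}$. For $\sigma\in\mathbb S_n$ write $\langle x_1,\dots,x_n\rangle_\sigma:=\langle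 x_{\sigma(1)},\dots,x_{\sigma(n)}\rangle$; for subsets $A_1,\dots,A_n$, $\langle A_1,\dots,A_n\rangle_\sigma$ denotes the linear span of all $\langle x_1,\dots,x_n\rangle_\sigma$ with $x_r\in A_r$. A color gLt-algebra is a graded $n$-ary algebra satisfying, for each $k=1,\dots,n$ and fixed scalars $\alpha^{\sigma_1,\sigma_2}_{i,j,k}\in\mathbb F$, the color version (each term on the right multiplied by the product of values of $\epsilon$ on the degrees of the homogeneous arguments transposed in passing from the left-hand order to the order of that term) of the identity $\langle y_1,\dots,y_{k-1},\langle x_1,\dots,x_n\rangle,y_k,\dots,y_{n-1}\rangle=\sum_{1\le i,j\le n,\,\sigma_1\in\mathbb S_n,\,\sigma_2\in\mathbb S_{n-1}}\alpha^{\sigma_1,\sigma_2}_{i,j,k}\langle x_{\sigma_1(1)},\dots,x_{\sigma_1(i-1)},\langle y_{\sigma_2(1)},\dots,y_{\sigma_2(j-1)},x_{\sigma_1(i)},y_{\sigma_2(j)},\dots,y_{\sigma_2(n-1)}\rangle,x_{\sigma_1(i+1)},\dots,x_{\sigma_1(n)}\rangle$. A $\mathbb G$-graded subspace $\mathcal I\subset\mathfrak L$ is a color gLt-ideal if $\langle\mathcal I,\mathfrak L,\dots,\mathfrak L\rangle_\sigma\subset\mathcal I$ for every $\sigma\in\mathbb S_n$. $\mathfrak L$ admits a quasi-multiplicative basis if $\mathfrak L=\mathbb V\oplus\mathbb W$ with $\mathbb V$, $\mathbb W\ne0$ graded subspaces and $\mathfrak B=\{e_i\}_{i\in I}$ a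 basis of homogeneous elements of $\mathbb W$ such that: (1) for $i_1,\dots,i_n\in I$, either $\langle e_{i_1},\dots,e_{i_n}\rangle\in\mathbb Fe_j$ for some $j\in I$ or $\langle e_{i_1},\dots,e_{i_n}\rangle\in\mathbb V$; (2) for $0<k<n$, $i_1,\dots,i_k\in I$ and $\sigma\in\mathbb S_n$, $\langle e_{i_1},\dots,e_{i_k},\mathbb V,\dots,\mathbb V\rangle_\sigma\subset\mathbb Fe_{j_\sigma}$ for some $j_\sigma\in I$; (3) either $\langle\mathbb V,\dots,\mathbb V\rangle\subset\mathbb Fe_j$ for some $j\in I$ or $\langle\mathbb V,\dots,\mathbb V\rangle\subset\mathbb V$. A graded subalgebra (or ideal) $\mathfrak S$ has a quasi-multiplicative basis inherited by the one of $\mathfrak L$ if $\mathfrak S=\mathbb V_{\mathfrak S}\oplus\mathbb W_{\mathfrak S}$ with $\mathbb V_{\mathfrak S}$ a graded subspace of $\mathbb V$ and $0\ne\mathbb W_{\mathfrak S}$ a graded subspace of $\mathbb W$ admitting a subset $\mathfrak B'\subset\mathfrak B$ as a basis. Index maps: let $v$ be a symbol not in $I$, $\mathfrak I:=I\,\dot\cup\,\{v\}$; for each $j\in\mathfrak I$ take a new symbol $\overline j$, $\overline I:=\{\overline i:i\in I\}$, $\overline{\mathfrak I}:=\overline I\,\dot\cup\,\{\overline v\}$; set $\overline{(\overline j)}:=j$, $\overline J:=\{\overline j:j\in J\}$ for a set $J$ of symbols ($\overline\emptyset=\emptyset$). Put $u_j:=e_j$ for $j\in I$ and $u_v:=\mathbb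 V$. For $\sigma\in\mathbb S_n$ and $(j_1,\dots,j_n)\in\mathfrak I^n$ let $a_\sigma(j_1,\dots,j_n)=\{r\}$ if $r\in I$ and $0\ne\langle u_{j_1},\dots,u_{j_n}\rangle_\sigma\subset\mathbb Fe_r$, $=\{v\}$ if $0\ne\langle u_{j_1},\dots,u_{j_n}\rangle_\sigma\subset\mathbb V$, and $=\emptyset$ otherwise. For $j,j_2,\dots,j_n\in\mathfrak I$ let $b_\sigma(j,\overline j_2,\dots,\overline j_n):=\{x\in\mathfrak I: a_\sigma(x,j_2,\dots,j_n)=\{j\}\}$. Define $\mu$ on $(\mathfrak I\,\dot\cup\,\overline{\mathfrak I})\times(\mathfrak I^{n-1}\,\dot\cup\,\overline{\mathfrak I}^{n-1})$ with values subsets of $\mathfrak I$ by: $\mu(j,j_1,\dots,j_{n-1})=\bigcup_{\sigma\in\mathbb S_n}a_\sigma(j,j_1,\dots,j_{n-1})$ for $j,j_1,\dots,j_{n-1}\in\mathfrak I$; $\mu(j,\overline j_1,\dots,\overline j_{n-1})=\bigcup_{\sigma\in\mathbb S_n}b_\sigma(j,\overline j_1,\dots,\overline j_{n-1})$ for $j,j_1,\dots,j_{n-1}\in\mathfrak I$; $\mu(\overline j,j_1,\dots,j_{n-1})=\bigcup_{1\le k\le n-1,\ \sigma\in\mathbb S_n}b_\sigma(j_k,\overline j,\overline j_1,\dots,\overline j_{k-1},\overline j_{k+1},\dots,\overline j_{n-1})$ for $j,j_1,\dots,j_{n-1}\in\mathfrak I$; and $\mu(\overline j,\overline j_1,\dots,\overline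 j_{n-1})=\emptyset$. Define $\phi$ on pairs $(J,X)$ with $J\subset I\,\dot\cup\,\overline I$ and $X\in\mathfrak I^{n-1}\,\dot\cup\,\overline{\mathfrak I}^{n-1}$ by $\phi(\emptyset,X)=\emptyset$ and, for $J\ne\emptyset$, $\phi(J,X):=K\cup\overline K$ where $K:=\big(\bigcup_{j\in J}\mu(j,X)\big)\setminus\{v\}$. Connections: for distinct $i,j\in I$, $i$ is connected to $j$ if there exist $t\ge1$, $X_1,\dots,X_t\in\mathfrak I^{n-1}\,\dot\cup\,\overline{\mathfrak I}^{n-1}$ and $\widetilde i\in\{i,\overline i\}$ such that $\phi(\{\widetilde i\},X_1)\ne\emptyset$, …, $\phi(\cdots\phi(\{\widetilde i\},X_1)\cdots,X_{t-1})\ne\emptyset$, and $j\in\phi(\cdots\phi(\phi(\{\widetilde i\},X_1),X_2)\cdots,X_t)$; every $i$ is connected to itself. Being connected is an equivalence relation $\sim$ on $I$; $[i]$ denotes the class of $i$. Define $\mathbb V_{[i]}:=\big(\sum_{i_1,\dots,i_n\in[i]}\mathbb F\langle e_{i_1},\dots,e_{i_n}\rangle\big)\cap\mathbb V$, $\mathbb W_{[i]}:=\bigoplus_{j\in[i]}\mathbb Fe_j$, and $\mathfrak J_{[i]}:=\mathbb V_{[i]}\oplus\mathbb W_{[i]}$. *)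

From HB Require Import structures.
From mathcomp Require Import all_boot all_order all_algebra all_fingroup.
Set Implicit Arguments.
Unset Strict Implicit.
Unset Printing Implicit Defensive.
Import GRing.Theory.
Local Open Scope ring_scope.

Section ColorGLt.
Variables (F : fieldType) (G : zmodType) (L : lmodType F) (n : nat).

Definition lspan (S : L -> Prop) : L -> Prop :=
  fun x => exists m (c : 'I_m -> F) (v : 'I_m -> L),
    (forall k, S (v k)) /\ x = \sum_(k < m) c k *: v k.

Definition subspace (S : L -> Prop) : Prop :=
  S 0 /\ forall (a : F) x y, S x -> S y -> S (a *: x + y).

Definition lsubset (A B : L -> Prop) : Prop := forall x, A x -> B x.

Variable Lg : G -> L -> Prop.

Definition graded_space : Prop :=
  (forall g, subspace (Lg g)) /\
  (forall x, exists m (gs : 'I_m -> G) (xs : 'I_m -> L),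
      (forall k, Lg (gs k) (xs k)) /\ x = \sum_(k < m) xs k) /\
  (forall m (gs : 'I_m -> G) (xs : 'I_m -> L), injective gs ->
      (forall k, Lg (gs k) (xs k)) -> \sum_(k < m) xs k = 0 -> forall k, xs k = 0).

Definition homogeneous (x : L) : Prop := exists g, Lg g x.

Definition graded_sub (S : L -> Prop) : Prop :=
  subspace S /\
  forall x, S x -> exists m (gs : 'I_m -> G) (xs : 'I_m -> L),
      (forall k, S (xs k) /\ Lg (gs k) (xs k)) /\ x = \sum_(k < m) xs k.

Variable prod : ('I_n -> L) -> L.

Definition upd (x : 'I_n -> L) (i : 'I_n) (v : L) : 'I_n -> L :=
  fun j => if j == i then v else x j.

Definition multilinear : Prop :=
  forall x i (a : F) u v,
    prod (upd x i (a *: u + v)) = a *: prod (upd x i u) + prod (upd x i v).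

Definition graded_nary_algebra : Prop :=
  graded_space /\ multilinear /\
  forall (g : 'I_n -> G) (x : 'I_n -> L),
    (forall r, Lg (g r) (x r)) -> Lg (\sum_(r < n) g r) (prod x).

Definition prodS (s : seq L) : L := prod (fun j : 'I_n => nth 0 s j).

Definition bracket (s : 'S_n) (A : 'I_n -> L -> Prop) : L -> Prop :=
  lspan (fun z => exists x : 'I_n -> L, (forall r, A r (x r)) /\ z = prod (fun r => x (s r))).

Variable eps : G -> G -> F.

Definition bicharacter : Prop :=
  (forall g h, eps g h != 0) /\
  (forall k g h, eps k (g + h) = eps k g * eps k h) /\
  (forall g h k, eps (g + h) k = eps g k * eps h k) /\
  (forall g h, eps g h * eps h g = 1).

(* Koszul factor: product of eps(deg p, deg q) over all pairs (p, q) with p before q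
   in the order s and q before p in the order t (pairs of arguments transposed). *)
Definition koszul (S : eqType) (d : S -> G) (s t : seq S) : F :=
  \prod_(p <- s) \prod_(q <- s | (index p s < index q s)%N && (index q t < index p t)%N)
     eps (d p) (d q).

Definition color_gLt : Prop :=
  graded_nary_algebra /\
  exists alpha : 'I_n -> 'I_n -> 'I_n -> 'S_n -> 'S_n.-1 -> F,
  forall (k : 'I_n) (gx : 'I_n -> G) (gy : 'I_n.-1 -> G) (x : 'I_n -> L) (y : 'I_n.-1 -> L),
    (forall a, Lg (gx a) (x a)) -> (forall b, Lg (gy b) (y b)) ->
    let xs := [seq x a | a <- enum 'I_n] in
    let ys := [seq y b | b <- enum 'I_n.-1] in
    let deg := fun sl : ('I_n + 'I_n.-1)%type =>
                 match sl with inl a => gx a | inr b => gy b end in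
    let lslots := take k [seq inr b | b <- enum 'I_n.-1]
                  ++ [seq inl a | a <- enum 'I_n]
                  ++ drop k [seq inr b | b <- enum 'I_n.-1] in
    prodS (take k ys ++ prodS xs :: drop k ys) =
    \sum_(i < n) \sum_(j < n) \sum_(s1 : 'S_n) \sum_(s2 : 'S_n.-1)
      let xs1 := [seq x (s1 a) | a <- enum 'I_n] in
      let ys2 := [seq y (s2 b) | b <- enum 'I_n.-1] in
      let xs1l := [seq @inl 'I_n 'I_n.-1 (s1 a) | a <- enum 'I_n] in
      let ys2l := [seq @inr 'I_n 'I_n.-1 (s2 b) | b <- enum 'I_n.-1] in
      let rslots := take i xs1l ++ (take j ys2l ++ inl (s1 i) :: drop j ys2l)
                    ++ drop i.+1 xs1l in
      (alpha i j k s1 s2 * koszul deg lslots rslots) *: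
        prodS (take i xs1 ++ prodS (take j ys2 ++ xs1`_i :: drop j ys2) :: drop i.+1 xs1).

Definition argsL (J : L -> Prop) : 'I_n -> L -> Prop :=
  fun r => if val r == 0%N then J else (fun _ => True).

Definition gLt_ideal (J : L -> Prop) : Prop :=
  graded_sub J /\ forall s : 'S_n, lsubset (bracket s (argsL J)) J.

Variables (I : Type) (e : I -> L).

Definition Fe (j : I) : L -> Prop := fun x => exists a : F, x = a *: e j.

Definition is_basis_of (P : I -> Prop) (W : L -> Prop) : Prop :=
  (forall i, P i -> W (e i)) /\
  (forall m (f : 'I_m -> I) (c : 'I_m -> F), injective f -> (forall k, P (f k)) ->
      \sum_(k < m) c k *: e (f k) = 0 -> forall k, c k = 0) /\
  (forall x, W x -> lspan (fun z => exists i, P i /\ z = e i) x).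

Definition direct_sum (S A B : L -> Prop) : Prop :=
  (forall x, A x -> B x -> x = 0) /\
  (forall x, S x <-> exists a b, A a /\ B b /\ x = a + b).

Definition qm_basis (V W : L -> Prop) : Prop :=
  graded_sub V /\ graded_sub W /\ (exists w, W w /\ w != 0) /\
  direct_sum (fun _ => True) V W /\
  (forall i, homogeneous (e i)) /\ is_basis_of (fun _ => True) W /\
  (forall ix : 'I_n -> I,
      (exists j, Fe j (prod (fun r => e (ix r)))) \/ V (prod (fun r => e (ix r)))) /\
  (forall (k : nat) (ix : 'I_n -> I), (0 < k < n)%N -> forall s : 'S_n,
      exists j, lsubset (bracket s (fun r => if (val r < k)%N then (fun x => x = e (ix r)) else V))
                       (Fe j)) /\
  ((exists j, lsubset (bracket 1%g (fun _ => V)) (Fe j)) \/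
   lsubset (bracket 1%g (fun _ => V)) V).

Definition inherited_qm_basis (V W S : L -> Prop) : Prop :=
  exists (VS WS : L -> Prop) (B' : I -> Prop),
    graded_sub VS /\ lsubset VS V /\ graded_sub WS /\ lsubset WS W /\
    (exists w, WS w /\ w != 0) /\ is_basis_of B' WS /\ direct_sum S VS WS.

(* frak I = option I, with None playing the role of the symbol v *)
Definition uset (j : option I) (V : L -> Prop) : L -> Prop :=
  match j with Some i => (fun x => x = e i) | None => V end.

Definition nonzero_sp (S : L -> Prop) : Prop := exists x, S x /\ x != 0.

Definition amap (V : L -> Prop) (s : 'S_n) (js : seq (option I)) : option I -> Prop :=
  fun t => let B := bracket s (fun r => uset (nth None js r) V) in
    nonzero_sp B /\
    match t with Some r => lsubset B (Fe r) | None => lsubset B V end.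

Definition bmap (V : L -> Prop) (s : 'S_n) (j : option I) (js : seq (option I))
  : option I -> Prop :=
  fun x => forall t, amap V s (x :: js) t <-> t = j.

Definition rem_at (T : Type) (k : nat) (s : seq T) := take k s ++ drop k.+1 s.

(* mu(j, X); bj / bX are true for barred symbols *)
Definition mu (V : L -> Prop) (bj : bool) (j : option I) (bX : bool)
  (X : 'I_n.-1 -> option I) : option I -> Prop :=
  let xs := [seq X k | k <- enum 'I_n.-1] in
  match bj, bX with
  | false, false => fun t => exists s : 'S_n, amap V s (j :: xs) t
  | false, true  => fun t => exists s : 'S_n, bmap V s j xs t
  | true, false  => fun t => exists (k : 'I_n.-1) (s : 'S_n), bmap V s (X k) (j :: rem_at k xs) t
  | true, true   => fun _ => False
  end.

(* phi(J, X) for J a lsubset of I |_| bar I (pairs (barred?, i)) *)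
Definition phi (V : L -> Prop) (J : bool * I -> Prop) (X : bool * ('I_n.-1 -> option I))
  : bool * I -> Prop :=
  fun y => exists j, J j /\ mu V j.1 (Some j.2) X.1 X.2 (Some y.2).

Definition connected (V : L -> Prop) (i j : I) : Prop :=
  i = j \/
  exists (Xs : seq (bool * ('I_n.-1 -> option I))) (b : bool),
    (1 <= size Xs)%N /\
    (forall m, (0 < m < size Xs)%N ->
        exists y, foldl (phi V) (fun z => z = (b, i)) (take m Xs) y) /\
    foldl (phi V) (fun z => z = (b, i)) Xs (false, j).

Definition Vcl (V : L -> Prop) (C : I -> Prop) : L -> Prop :=
  fun x => lspan (fun z => exists ix : 'I_n -> I, (forall r, C (ix r)) /\
                                       z = prod (fun r => e (ix r))) x /\ V x.

Definition Wcl (C : I -> Prop) : L -> Prop := lspan (fun z => exists j, C j /\ z = e j).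

Definition Jcl (V : L -> Prop) (C : I -> Prop) : L -> Prop :=
  fun x => exists v w, Vcl V C v /\ Wcl C w /\ x = v + w.

Definition args2 (J1 J2 : L -> Prop) : 'I_n -> L -> Prop :=
  fun r => if val r == 0%N then J1 else if val r == 1%N then J2 else (fun _ => True).

End ColorGLt.

From HB Require Import structures.
From mathcomp Require Import all_boot all_order all_algebra all_fingroup.
From mathcomp Require Import zify.
From Stdlib Require Import Lia FunctionalExtensionality Classical Relations.
Set Implicit Arguments.
Unset Strict Implicit.
Unset Printing Implicit Defensive.
Import GRing.Theory.
Local Open Scope ring_scope.

(* The index maps define a step relation [adjacent] on I whose reflexive-transitive closure
   is connectedness; every kind of step is undone by another one, so connectedness is an
   equivalence.  By the axioms of a quasi-multiplicative basis, a nonzero product of basis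
   vectors and elements of V in which e_a occurs is either a multiple of some e_j with j ~ a,
   or lies in V and has only basis vectors e_l with l ~ a as arguments.  By multilinearity, a
   product in which e_a and e_b occur with a, b not connected vanishes, and a product in which
   e_a occurs lies in J_[a].  The color gLt identity rewrites a product having a nested product
   <e_i1, ..., e_in> as an argument into a combination of products whose arguments but one are
   among the e_ik, the last one being a product containing some e_ik and the other original
   arguments; only this shape matters, not the coefficients.
   This reduces the ideal property of J_[i] and <J_[i], J_[h], L, ..., L> = 0 to the previous
   facts.  V_[i] is graded because homogeneous components are unique, and L = U (+) sum J_[i]
   because sum J_[i] = sum V_[i] + W. *)

Section LinearSpan.
Variables (F : fieldType) (L : lmodType F).
Implicit Types (P S U A B : L -> Prop) (x y : L).

Lemma subspace0 P : subspace P -> P 0.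
Proof. by case. Qed.

Lemma subspaceD P x y : subspace P -> P x -> P y -> P (x + y).
Proof. by move=> [_ PD] Px Py; rewrite -[x]scale1r; apply: PD. Qed.

Lemma subspaceZ P a x : subspace P -> P x -> P (a *: x).
Proof. by move=> [P0 PD] Px; rewrite -[_ *: _]addr0; apply: PD. Qed.

Lemma subspaceB P x y : subspace P -> P x -> P y -> P (x - y).
Proof. by move=> sP Px Py; rewrite -scaleN1r; apply: subspaceD => //; apply: subspaceZ. Qed.

Lemma subspace_sum P (T : Type) (r : seq T) (Q : pred T) (f : T -> L) :
  subspace P -> (forall i, Q i -> P (f i)) -> P (\sum_(i <- r | Q i) f i).
Proof.
move=> sP PQ; apply: (big_ind P) => //; [exact: subspace0 | move=> x y; exact: subspaceD].
Qed.

Lemma subspace_eq0 : subspace (fun x : L => x = 0).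
Proof. by split => // a x y -> ->; rewrite scaler0 addr0. Qed.

Definition addsp A B : L -> Prop := fun x => exists a b, A a /\ B b /\ x = a + b.

Lemma subspace_addsp A B : subspace A -> subspace B -> subspace (addsp A B).
Proof.
move=> sA sB; split; first by exists 0, 0; rewrite addr0; split; [|split]; try exact: subspace0.
move=> c _ _ [a1 [b1 [A1 [B1 ->]]]] [a2 [b2 [A2 [B2 ->]]]].
exists (c *: a1 + a2), (c *: b1 + b2); rewrite scalerDr addrACA.
by split; [case: sA => _; apply | split => //; case: sB => _; apply].
Qed.

Lemma addspl A B x : subspace B -> A x -> addsp A B x.
Proof. by move=> sB Ax; exists x, 0; rewrite addr0; split; [|split]; try exact: subspace0. Qed.

Lemma addspr A B x : subspace A -> B x -> addsp A B x.
Proof. by move=> sA Bx; exists 0, x; rewrite add0r; split; [exact: subspace0|]. Qed.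

Lemma mem_lspan S x : S x -> lspan S x.
Proof. by exists 1%N, (fun _ => 1), (fun _ => x); rewrite big_ord1 scale1r. Qed.

Lemma subspace_lspan S : subspace (lspan S).
Proof.
split; first by exists 0%N, (fun _ => 0), (fun _ => 0); rewrite big_ord0; split => [[]|].
move=> a _ _ [m1 [c1 [v1 [H1 ->]]]] [m2 [c2 [v2 [H2 ->]]]].
exists (m1 + m2)%N,
  (fun k => match split k with inl i => a * c1 i | inr j => c2 j end),
  (fun k => match split k with inl i => v1 i | inr j => v2 j end).
split; first by move=> k; case: (split k).
rewrite big_split_ord /= scaler_sumr; congr (_ + _); apply: eq_bigr => i _.
  by rewrite (unsplitK (inl i) : split (lshift m2 i) = inl i) scalerA.
by rewrite (unsplitK (inr i) : split (rshift m1 i) = inr i).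
Qed.

Lemma lspan_min P S : subspace P -> lsubset S P -> lsubset (lspan S) P.
Proof.
move=> sP SP x [k [c [v [Sv ->]]]].
by apply: subspace_sum => // i _; apply: subspaceZ => //; apply: SP.
Qed.

Lemma lspanS S S' : lsubset S S' -> lsubset (lspan S) (lspan S').
Proof. by move=> SS'; apply: lspan_min (subspace_lspan _) _ => x /SS' /mem_lspan. Qed.

Lemma direct_sum_ext T A B B' : (forall x, B x <-> B' x) ->
  direct_sum T A B -> direct_sum T A B'.
Proof.
move=> BB' [AB0 TAB]; split=> [x Ax /BB'|x]; first exact: AB0.
by rewrite TAB; split=> -[a [b [Aa [Bb ->]]]]; exists a, b; do 2 split => //; apply/BB'.
Qed.

Lemma direct_sum_addsp T V W U S : subspace V -> subspace U -> subspace S ->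
  direct_sum T V W -> direct_sum V U S -> direct_sum T U (addsp S W).
Proof.
move=> sV sU sS [VW0 TVW] [US0 VUS].
have UV x : U x -> V x by move=> Ux; apply/VUS; apply: addspl.
have SV x : S x -> V x by move=> Sx; apply/VUS; apply: addspr.
split.
  move=> x Ux [s [w [Ss [Ww Exsw]]]].
  have w0 : w = 0.
    apply: VW0 Ww; have -> : w = x - s by rewrite Exsw addrAC subrr add0r.
    by apply: subspaceB; [| apply: UV | apply: SV].
  by apply: US0 => //; rewrite Exsw w0 addr0.
move=> x; rewrite TVW; split=> [[v [w [Vv [Ww ->]]]]|[u [_ [Uu [[s [w [Ss [Ww ->]]]] ->]]]]].
  have [u [s [Uu [Ss ->]]]] := (VUS v).1 Vv.
  by exists u, (s + w); rewrite addrA; split => //; split => //; exists s, w.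
by exists (u + s), w; rewrite addrA; split => //; apply/VUS; exists u, s.
Qed.

End LinearSpan.

Section Multilinear.
Variables (F : fieldType) (L : lmodType F) (n : nat) (prod : ('I_n -> L) -> L).
Hypothesis prod_multilinear : multilinear prod.

Lemma upd_id (t : 'I_n -> L) i : upd t i (t i) = t.
Proof. by apply: functional_extensionality => j; rewrite /upd; case: eqP => [->|]. Qed.

Lemma subspace_prod_slot P t i : subspace P -> subspace (fun v => P (prod (upd t i v))).
Proof.
move=> sP; have prod0 : prod (upd t i 0) = 0.
  have := prod_multilinear t i 1 0 0; rewrite !scale1r addr0 => H.
  by apply: (addrI (prod (upd t i 0))); rewrite addr0 -H.
split=> [|a u v Pu Pv]; first by rewrite prod0; apply: subspace0.
by rewrite prod_multilinear; apply: subspaceD => //; apply: subspaceZ.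
Qed.

Lemma prod_eq0 (t : 'I_n -> L) i : t i = 0 -> prod t = 0.
Proof.
move=> ti0; rewrite -(upd_id t i) ti0.
by have /subspace0 := subspace_prod_slot t i (@subspace_eq0 _ L).
Qed.

Lemma prod_lspan_ind (P : L -> Prop) (S : 'I_n -> L -> Prop) :
  subspace P -> (forall t, (forall r, S r (t r)) -> P (prod t)) ->
  forall t, (forall r, lspan (S r) (t r)) -> P (prod t).
Proof.
move=> sP PS.
suff PSk k : (k <= n)%N -> forall t, (forall r : 'I_n, (r < k)%N -> lspan (S r) (t r)) ->
    (forall r : 'I_n, (k <= r)%N -> S r (t r)) -> P (prod t).
  by move=> t St; apply: (PSk n) => // r; rewrite leqNgt ltn_ord.
elim: k => [|k IHk] kn t St1 St2; first by apply: PS => r; apply: St2.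
pose r0 := Ordinal kn; rewrite -(upd_id t r0).
apply: (lspan_min (subspace_prod_slot t r0 sP)) (St1 r0 (ltnSn k)) => v Sv.
apply: (IHk (ltnW kn)) => r; rewrite /upd; case: eqP => [->|/eqP rr0] rk.
- by rewrite ltnn in rk.
- by apply: St1; apply: ltnW.
- exact: Sv.
- by apply: St2; rewrite ltn_neqAle rk andbT; apply: contra rr0 => /eqP kr; apply/eqP/val_inj.
Qed.

End Multilinear.

Lemma nth_map_enum (T : Type) (k : nat) (d : T) (f : 'I_k -> T) (r : 'I_k) :
  nth d [seq f i | i <- enum 'I_k] r = f r.
Proof. by rewrite (nth_map r) ?nth_ord_enum // size_enum_ord. Qed.

Lemma map_enum_ordS (T : Type) (k : nat) (f : 'I_k.+1 -> T) :
  [seq f i | i <- enum 'I_k.+1] = f ord0 :: [seq f (lift ord0 i) | i <- enum 'I_k].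
Proof. by rewrite enum_ordSl /= -map_comp. Qed.

Lemma bracket_perm (F : fieldType) (L : lmodType F) (n : nat) (prod : ('I_n -> L) -> L)
    (s t : 'S_n) A z :
  bracket prod s A z <-> bracket prod (s * t^-1)%g (fun r => A (t r)) z.
Proof.
split; apply: lspanS => _ [x [Ax ->]].
  exists (fun r => x (t r)); split=> [r|]; first exact: Ax.
  by congr prod; apply: functional_extensionality => r; rewrite permM permKV.
exists (fun r => x ((t^-1)%g r)); split=> [r|]; first by have := Ax ((t^-1)%g r); rewrite permKV.
by congr prod; apply: functional_extensionality => r; rewrite permM.
Qed.

Lemma perm_of_perm_eq (k : nat) (d : 'I_k) (s : seq 'I_k) : perm_eq s (enum 'I_k) ->
  exists rho : 'S_k, forall r : 'I_k, nth d s r = rho r.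
Proof.
move=> perm_s; have [rho ->] := tuple_permP (perm_s : perm_eq _ (ord_tuple k)).
by exists rho => r; rewrite -tnth_nth tnth_mktuple tnth_ord_tuple.
Qed.

Lemma perm_arrange (k : nat) (l0 : seq 'I_k.+1) (P : pred 'I_k.+1) :
  uniq l0 -> all P l0 ->
  exists rho : 'S_k.+1, (forall r : 'I_k.+1, (r < size l0)%N -> rho r = nth ord0 l0 r) /\
    (forall r : 'I_k.+1, (r < count P (enum 'I_k.+1))%N = P (rho r)).
Proof.
move=> ul0 Pl0.
pose l1 := [seq r <- enum 'I_k.+1 | (r \notin l0) && P r].
pose l2 := [seq r <- enum 'I_k.+1 | (r \notin l0) && ~~ P r].
have Pl1 : all P l1 by apply/allP => r; rewrite mem_filter => /andP [/andP []].
have nPl2 : all (predC P) l2 by apply/allP => r; rewrite mem_filter => /andP [/andP []].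
have perm_l : perm_eq (l0 ++ l1 ++ l2) (enum 'I_k.+1).
  apply: uniq_perm; [|exact: enum_uniq|move=> r]; last first.
    rewrite mem_enum !mem_cat !(mem_filter (fun _ => _ && _)) mem_enum.
    by case: (r \in l0); case: (P r).
  have ul1 : uniq l1 by apply/filter_uniq/enum_uniq.
  have ul2 : uniq l2 by apply/filter_uniq/enum_uniq.
  rewrite cat_uniq ul0 cat_uniq ul1 ul2 /= andbT; apply/andP; split.
    by apply/hasPn => r; rewrite mem_cat !mem_filter => /orP [] /andP [/andP []].
  by apply/hasPn => r; rewrite !mem_filter => /andP [/andP [_ /negbTE ->]]; rewrite andbF.
have [rho nth_rho] := perm_of_perm_eq ord0 perm_l.
exists rho; split=> [r rl0|r]; first by rewrite -nth_rho nth_cat rl0.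
have size_l : (size (l0 ++ l1) + size l2 = k.+1)%N.
  by rewrite -size_cat -catA (perm_size perm_l) size_enum_ord.
have -> : count P (enum 'I_k.+1) = size (l0 ++ l1).
  have cP2 : count P l2 = 0%N by apply/eqP; rewrite -leqn0 leqNgt -has_count -all_predC.
  rewrite -(seq.permP perm_l) catA count_cat cP2 addn0.
  by apply/eqP; rewrite -all_count all_cat Pl0.
rewrite -nth_rho catA nth_cat; case: ltnP => rl.
  have Pl01 : all P (l0 ++ l1) by rewrite all_cat Pl0.
  by apply/esym/(allP Pl01)/mem_nth.
apply/esym/negbTE; apply: (allP nPl2); apply: mem_nth.
by rewrite -(ltn_add2l (size (l0 ++ l1))) subnKC // size_l.
Qed.

Section QuasiMultiplicativeBasis.
Variables (F : fieldType) (G : zmodType) (L : lmodType F) (n : nat).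
Variables (Lg : G -> L -> Prop) (prod : ('I_n -> L) -> L).
Variables (I : Type) (e : I -> L) (V W : L -> Prop).
Hypothesis qmB : qm_basis Lg prod e V W.

Lemma qm_V_graded : graded_sub Lg V. Proof. by case: qmB. Qed.
Lemma qm_V_subspace : subspace V. Proof. by case: qm_V_graded. Qed.
Lemma qm_W_subspace : subspace W. Proof. by case: qmB => _ [[]]. Qed.
Lemma qm_direct_sum : direct_sum (fun _ => True) V W.
Proof. by case: qmB => _ [_ [_ []]]. Qed.
Lemma qm_e_homogeneous i : homogeneous Lg (e i).
Proof. by case: qmB => _ [_ [_ [_ []]]]. Qed.
Lemma qm_e_basis : is_basis_of e (fun _ => True) W.
Proof. by case: qmB => _ [_ [_ [_ [_ []]]]]. Qed.
Lemma qm_prod_e (ix : 'I_n -> I) :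
  (exists j, Fe e j (prod (fun r => e (ix r)))) \/ V (prod (fun r => e (ix r))).
Proof. by case: qmB => _ [_ [_ [_ [_ [_ []]]]]]. Qed.
Lemma qm_prod_e_V (k : nat) (ix : 'I_n -> I) (s : 'S_n) : (0 < k < n)%N ->
  exists j, lsubset (bracket prod s (fun r => if (r < k)%N then (fun x => x = e (ix r)) else V))
                    (Fe e j).
Proof. by case: qmB => _ [_ [_ [_ [_ [_ [_ [H _]]]]]]] kn; apply: H. Qed.

Lemma VW_eq0 x : V x -> W x -> x = 0.
Proof. by case: qm_direct_sum => H _; apply: H. Qed.

Lemma e_in_W i : W (e i).
Proof. by case: qm_e_basis => H _; apply: H. Qed.

Lemma e_free2 i j a b : i <> j -> a *: e i + b *: e j = 0 -> a = 0.
Proof.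
move=> ij abij; case: qm_e_basis => _ [free _].
pose f (k : 'I_2) := if val k == 0%N then i else j.
have inj_f : injective f.
  move=> [[|[|k1]] p1] [[|[|k2]] p2] //= fij; apply: val_inj => //=; rewrite /f /= in fij.
  by case: (ij (esym fij)).
have := free 2%N f (fun k => if val k == 0%N then a else b) inj_f (fun _ => Logic.I).
by rewrite !big_ord_recl big_ord0 addr0 /= => /(_ abij ord0).
Qed.

Lemma e_neq0 i : e i != 0.
Proof.
apply/eqP => ei0; case: qm_e_basis => _ [free _].
have inj_f : injective (fun _ : 'I_1 => i) by move=> [[|//] ?] [[|//] ?] _; apply: val_inj.
have := free 1%N _ (fun _ => 1) inj_f (fun _ => Logic.I).
by rewrite big_ord1 scale1r ei0 => /(_ erefl ord0) /eqP; rewrite oner_eq0.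
Qed.

Lemma W_lspan_e x : W x -> lspan (fun z => exists l, z = e l) x.
Proof. by case: qm_e_basis => _ [_ H] /H; apply: lspanS => z [l [_ ->]]; exists l. Qed.

Lemma subspace_Fe j : subspace (Fe e j).
Proof.
split; first by exists 0; rewrite scale0r.
by move=> a _ _ [b ->] [c ->]; exists (a * b + c); rewrite scalerDl scalerA.
Qed.

Lemma Fe_V_eq0 j x : Fe e j x -> V x -> x = 0.
Proof. by move=> [a ->] Vx; apply: VW_eq0 Vx (subspaceZ _ qm_W_subspace (e_in_W j)). Qed.

Lemma Fe_inj j j' x : Fe e j x -> Fe e j' x -> x != 0 -> j = j'.
Proof.
move=> [a Ea] [b Eb] nx; apply: NNPP => jj'.
have a0 := e_free2 (a := a) (b := - b) jj'; rewrite scaleNr -Ea -Eb subrr in a0.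
by move: nx; rewrite Ea a0 // scale0r eqxx.
Qed.

Lemma amap_functional (s : 'S_n) js t t' :
  amap prod e V s js t -> amap prod e V s js t' -> t = t'.
Proof.
case: t => [r|] [[x [Bx nx]] Bt]; case: t' => [r'|] [_ Bt'] //.
- by congr Some; apply: (Fe_inj (Bt x Bx) (Bt' x Bx)).
- by move: nx; rewrite (Fe_V_eq0 (Bt x Bx) (Bt' x Bx)) eqxx.
- by move: nx; rewrite (Fe_V_eq0 (Bt' x Bx) (Bt x Bx)) eqxx.
Qed.

Lemma amap_perm (s rho : 'S_n) js js' t :
  (forall r : 'I_n, nth None js' r = nth None js (rho r)) ->
  amap prod e V s js t -> amap prod e V (s * rho^-1)%g js' t.
Proof.
move=> js'E [[z [Bz nz]] Bt].
have EB y : bracket prod s (fun r : 'I_n => uset e (nth None js r) V) y <->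
            bracket prod (s * rho^-1)%g (fun r : 'I_n => uset e (nth None js' r) V) y.
  have -> : (fun r : 'I_n => uset e (nth None js' r) V) =
            (fun r => uset e (nth None js (rho r)) V).
    by apply: functional_extensionality => r; rewrite js'E.
  exact: bracket_perm.
split; first by exists z; split => //; apply/EB.
by case: t Bt => [r|] Bt y /EB By; apply: Bt.
Qed.

Lemma subspace_Vcl C : subspace (Vcl prod e V C).
Proof.
have [span0 spanD] := subspace_lspan
  (fun z => exists ix : 'I_n -> I, (forall r, C (ix r)) /\ z = prod (fun r => e (ix r))).
have [V0 VD] := qm_V_subspace.
by split=> [|a x y [Sx Vx] [Sy Vy]]; split; [| | apply: spanD | apply: VD].
Qed.

Lemma subspace_Jcl C : subspace (Jcl prod e V C).
Proof. exact: subspace_addsp (subspace_Vcl C) (subspace_lspan _). Qed.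

Lemma Vcl_Jcl C x : Vcl prod e V C x -> Jcl prod e V C x.
Proof. exact: addspl (subspace_lspan _). Qed.

Lemma Wcl_Jcl C x : Wcl e C x -> Jcl prod e V C x.
Proof. exact: addspr (subspace_Vcl C). Qed.

Lemma Wcl_W C x : Wcl e C x -> W x.
Proof. by apply: (lspan_min qm_W_subspace) => _ [j [_ ->]]; apply: e_in_W. Qed.

Definition basic (z : L) : Prop := exists j, uset e j V z.

Definition hbasic (z : L) : Prop := basic z /\ homogeneous Lg z.

Lemma lspan_hbasic x : lspan hbasic x.
Proof.
have [_ /(_ x) [/(_ Logic.I) [v [w [Vv [Ww ->]]]] _]] := qm_direct_sum.
apply: subspaceD; first exact: subspace_lspan.
  have [_ /(_ v Vv) [k [gs [vs [Hvs ->]]]]] := qm_V_graded.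
  apply: subspace_sum; first exact: subspace_lspan.
  by move=> r _; apply: mem_lspan; have [Vr Lr] := Hvs r; split; [exists None | exists (gs r)].
apply: lspanS (W_lspan_e Ww) => _ [l ->].
by split; [exists (Some l) | exact: qm_e_homogeneous].
Qed.

Definition matches (sym : 'I_n -> option I) (w : 'I_n -> L) : Prop :=
  forall r, uset e (sym r) V (w r).

Definition slot_set (S0 : 'I_n -> option I) (r : 'I_n) : L -> Prop :=
  if S0 r is Some l then (fun z => z = e l) else basic.

Lemma lspan_slot_set S0 (t : 'I_n -> L) :
  (forall r l, S0 r = Some l -> t r = e l) -> forall r, lspan (slot_set S0 r) (t r).
Proof.
move=> Ht r; rewrite /slot_set; case E: (S0 r) => [l|].
  by rewrite (Ht r l E); apply: mem_lspan.
by apply: lspanS (lspan_hbasic _) => z [].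
Qed.

Lemma matches_slot_set S0 (w : 'I_n -> L) : (forall r, slot_set S0 r (w r)) ->
  exists2 sym, matches sym w & forall r l, S0 r = Some l -> sym r = Some l.
Proof.
move=> Hw.
have : forall r, exists j, uset e j V (w r) /\ forall l, S0 r = Some l -> j = Some l.
  move=> r; have := Hw r; rewrite /slot_set.
  by case: (S0 r) => [l ->|[j Hj]]; [exists (Some l); split => // l' [->] | exists j].
case/fin_all_exists => sym Hsym; exists sym => [r | r l]; first by case: (Hsym r).
by case: (Hsym r) => _; apply.
Qed.

Definition adjacent (a b : I) : Prop :=
  exists bj (X : bool * ('I_n.-1 -> option I)), mu prod e V bj (Some a) X.1 X.2 (Some b).

Lemma adjacent_amap (s : 'S_n) a (X : 'I_n.-1 -> option I) j :
  amap prod e V s (Some a :: [seq X k | k <- enum 'I_n.-1]) (Some j) -> adjacent a j.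
Proof. by move=> H; exists false, (false, X); exists s. Qed.

Lemma foldl_phi_nonempty J Xs y : foldl (phi prod e V) J Xs y -> exists y', J y'.
Proof. by elim: Xs J y => [|X Xs IH] J y /=; [exists y | case/IH => _ [j [Jj _]]; exists j]. Qed.

Lemma foldl_phi_adjacent b i Xs y :
  foldl (phi prod e V) (fun z => z = (b, i)) Xs y -> clos_refl_trans I adjacent i y.2.
Proof.
elim/last_ind: Xs y => [|Xs X IH] y /=; first by move=> ->; apply: rt_refl.
rewrite foldl_rcons => -[j [Jj mu_j]].
by apply: rt_trans (IH _ Jj) (rt_step _ _ _ _ _); exists j.1, X.
Qed.

Lemma adjacent_foldl_phi i j : clos_trans I adjacent i j ->
  exists Xs b, (0 < size Xs)%N /\ forall b', foldl (phi prod e V) (fun z => z = (b, i)) Xs (b', j).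
Proof.
move=> Hij; elim: (clos_trans_tn1 _ _ _ _ Hij) => [y [bj [X Hmu]]|].
  by exists [:: X], bj; split => // b' /=; exists (bj, i).
move=> y z [bj [X Hmu]] _ [Xs [b [_ HXs]]].
exists (rcons Xs X), b; split; first by rewrite size_rcons.
by move=> b'; rewrite foldl_rcons; exists (bj, y); split => //; apply: HXs.
Qed.

Lemma connected_refl a : connected prod e V a a.
Proof. by left. Qed.

Lemma connectedE a b : connected prod e V a b <-> clos_refl_trans I adjacent a b.
Proof.
split=> [[->|[Xs [b0 [_ [_ /foldl_phi_adjacent //]]]]]|]; first exact: rt_refl.
move=> Hab; case: (clos_rt_rtn1 _ _ _ _ Hab) => [|y z yz ay]; first by left.
have [Xs [b0 [nXs HXs]]] :=
  adjacent_foldl_phi (clos_rt_t _ _ _ _ _ (clos_rtn1_rt _ _ _ _ ay) (t_step _ _ _ _ yz)).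
right; exists Xs, b0; split => //.
split=> [k _|]; last exact: HXs.
by move: (HXs false); rewrite -{1}(cat_take_drop k Xs) foldl_cat => /foldl_phi_nonempty.
Qed.

End QuasiMultiplicativeBasis.

Section Connections.
Variables (F : fieldType) (G : zmodType) (L : lmodType F) (m : nat).
Local Notation n := m.+2.
Variables (Lg : G -> L -> Prop) (prod : ('I_n -> L) -> L).
Variables (I : Type) (e : I -> L) (V W : L -> Prop).
Hypothesis prod_multilinear : multilinear prod.
Hypothesis qmB : qm_basis Lg prod e V W.

Local Notation amap := (amap prod e V).
Local Notation adjacent := (adjacent prod e V).
Local Notation connected := (connected prod e V).
Local Notation matches := (matches e V).

Definition slot1 : 'I_n := lift ord0 ord0.

Lemma adjacent_amapV (s : 'S_n) a b (Y : 'I_m -> option I) :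
  amap s (Some b :: Some a :: [seq Y k | k <- enum 'I_m]) None -> adjacent a b.
Proof.
move=> Hab; pose X (k : 'I_m.+1) := if unlift ord0 k is Some k' then Y k' else None.
have remX : rem_at (ord0 : 'I_m.+1) [seq X k | k <- enum 'I_m.+1] = [seq Y k | k <- enum 'I_m].
  by rewrite map_enum_ordS /rem_at /= drop0; apply: eq_map => k; rewrite /X liftK.
exists true, (false, X); exists ord0, s => t /=; rewrite remX /X unlift_none.
split=> [Ht|->]; last exact: Hab.
exact: (amap_functional qmB Ht Hab).
Qed.

Lemma amap_swap (s : 'S_n) x y js t :
  amap s (x :: y :: js) t -> amap (s * (tperm ord0 slot1)^-1)%g (y :: x :: js) t.
Proof.
apply: amap_perm => r; case: tpermP => [->|->|] //.
by case: r => [[|[|r]] ?] // r0 r1; [case: r0 | case: r1]; apply: val_inj.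
Qed.

(* Each kind of step of [mu] is undone by another kind; for the barred one this swaps the
   first two arguments. *)
Lemma adjacent_sym a b : adjacent a b -> adjacent b a.
Proof.
have swapK : ((tperm ord0 slot1)^-1 * (tperm ord0 slot1)^-1 = 1)%g by rewrite tpermV tperm2.
case=> [[] [[[] X] Hmu]] //=; rewrite /mu /= in Hmu.
- case: Hmu => k [s Hs]; exists true, (false, X); exists k, (s * (tperm ord0 slot1)^-1)%g => t.
  split=> [/amap_swap|Et]; last by apply: amap_swap; apply/Hs.
  by rewrite -mulgA swapK mulg1 => /Hs.
- by case: Hmu => s Hs; exists false, (false, X); exists s; apply/Hs.
- case: Hmu => s Hs; exists false, (true, X); exists s => t.
  by split=> [Ht|->//]; apply: (amap_functional qmB Ht Hs).
Qed.

Lemma adjacent_connected a b : adjacent a b -> connected a b.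
Proof. by move=> ab; apply/connectedE/rt_step. Qed.

Lemma connected_trans a b c : connected a b -> connected b c -> connected a c.
Proof. by move=> /connectedE ab /connectedE bc; apply/connectedE/(rt_trans _ _ _ _ _ ab bc). Qed.

Lemma connected_sym a b : connected a b -> connected b a.
Proof.
move=> /connectedE; elim=> [x y /adjacent_sym/adjacent_connected //|x|x y z _ yx _ zy].
  exact: connected_refl.
exact: connected_trans zy yx.
Qed.

Lemma connected_classes_disjoint i h c d : ~ (forall j, connected i j <-> connected h j) ->
  connected i c -> connected h d -> ~ connected c d.
Proof.
move=> ih ic hd cd; apply: ih => j.
have ihc : connected i h := connected_trans (connected_trans ic cd) (connected_sym hd).
by split=> [/(connected_trans (connected_sym ihc))|/(connected_trans ihc)].
Qed.

Lemma exists_perm2 (p q : 'I_n) : p != q -> exists rho : 'S_n, rho ord0 = p /\ rho slot1 = q.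
Proof.
move=> pq; have [|//|rho [rho_pq _]] := perm_arrange (l0 := [:: p; q]) (P := predT).
  by rewrite /= inE pq.
by exists rho; rewrite !rho_pq.
Qed.

Local Notation syms sym := [seq sym r | r <- enum 'I_n].

Lemma bracket_matches (rho : 'S_n) (sym : 'I_n -> option I) (w : 'I_n -> L) : matches sym w ->
  bracket prod (rho^-1)%g (fun r => uset e (nth None (syms (sym \o rho)) r) V) (prod w).
Proof.
move=> Hw; apply: mem_lspan; exists (fun r => w (rho r)); split=> [r|].
  by rewrite nth_map_enum; apply: Hw.
by congr prod; apply: functional_extensionality => r; rewrite permKV.
Qed.

Lemma adjacent_syms (rho : 'S_n) (sym : 'I_n -> option I) a j : sym (rho ord0) = Some a ->
  amap (rho^-1)%g (syms (sym \o rho)) (Some j) -> adjacent a j.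
Proof. by rewrite map_enum_ordS /= => ->; apply: adjacent_amap. Qed.

Lemma adjacent_symsV (rho : 'S_n) (sym : 'I_n -> option I) a b :
  sym (rho ord0) = Some b -> sym (rho slot1) = Some a ->
  amap (rho^-1)%g (syms (sym \o rho)) None -> adjacent a b.
Proof. by rewrite map_enum_ordS map_enum_ordS /= => -> ->; apply: adjacent_amapV. Qed.

Lemma amap_all_basis (rho : 'S_n) (sym : 'I_n -> option I) (w : 'I_n -> L) (t : option I) :
  (forall r, isSome (sym r)) -> matches sym w -> prod w != 0 ->
  (if t is Some j then Fe e j (prod w) else V (prod w)) ->
  amap (rho^-1)%g (syms (sym \o rho)) t.
Proof.
move=> allS Hw nz Ht; split; first by exists (prod w); split => //; apply: bracket_matches.
have Bw : lsubset (bracket prod (rho^-1)%g (fun r => uset e (nth None (syms (sym \o rho)) r) V))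
                  (lspan (fun y => y = prod w)).
  apply: lspanS => _ [x [Hx ->]]; congr prod; apply: functional_extensionality => r.
  have := Hx ((rho^-1)%g r); have := Hw r; rewrite nth_map_enum /= permKV.
  by case: (sym r) (allS r) => // l _ -> ->.
case: t Ht => [j|] Ht z /Bw.
  by apply: (lspan_min (subspace_Fe e j)) => _ ->.
by apply: (lspan_min (qm_V_subspace qmB)) => _ ->.
Qed.

(* Moving the basis slots to the front, [p] first, makes axiom (2) of quasi-multiplicative
   bases applicable. *)
Lemma amap_mixed (sym : 'I_n -> option I) w p a : matches sym w -> sym p = Some a ->
  ~~ [forall r, isSome (sym r)] -> prod w != 0 ->
  exists j (rho : 'S_n), rho ord0 = p /\ amap (rho^-1)%g (syms (sym \o rho)) (Some j).
Proof.
move=> Hw sp /forallPn [r0 r0V] nz; pose P r := isSome (sym r).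
have [//||rho [rho0 rhoP]] := perm_arrange (l0 := [:: p]) (P := P); first by rewrite /= /P sp.
have kn : (0 < count P (enum 'I_n) < n)%N.
  have : (0 < count P (enum 'I_n))%N.
    by rewrite -has_count; apply/hasP; exists p; rewrite ?mem_enum // /P sp.
  have : (0 < count (predC P) (enum 'I_n))%N.
    by rewrite -has_count; apply/hasP; exists r0; rewrite ?mem_enum.
  by have := count_predC P (enum 'I_n); rewrite size_enum_ord; lia.
have [j Bj] := qm_prod_e_V qmB (fun r => odflt a (sym (rho r))) (rho^-1)%g kn.
exists j, rho; split; first exact: rho0.
have EB : (fun r : 'I_n => if (r < count P (enum 'I_n))%N then
                             (fun x => x = e (odflt a (sym (rho r)))) else V) =
          (fun r => uset e (nth None (syms (sym \o rho)) r) V).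
  by apply: functional_extensionality => r; rewrite nth_map_enum rhoP /P /=; case: (sym (rho r)).
rewrite EB in Bj; split => //; exists (prod w); split => //; exact: bracket_matches.
Qed.

Lemma prod_basic_cases (sym : 'I_n -> option I) w p a :
  matches sym w -> sym p = Some a -> prod w != 0 ->
  (exists j, connected a j /\ Fe e j (prod w)) \/
  (V (prod w) /\ forall r, exists l, sym r = Some l /\ connected a l).
Proof.
move=> Hw sp nz; case: (boolP [forall r, isSome (sym r)]) => [/forallP allS|someV]; last first.
  have [j [rho [rho0 Aj]]] := amap_mixed Hw sp someV nz.
  left; exists j; split; first by apply/adjacent_connected/(adjacent_syms _ Aj); rewrite rho0.
  by case: Aj => _; apply; apply: bracket_matches.
pose ix r := odflt a (sym r).
have symE r : sym r = Some (ix r) by rewrite /ix; case: (sym r) (allS r).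
have Ew : prod w = prod (fun r => e (ix r)).
  by congr prod; apply: functional_extensionality => r; have := Hw r; rewrite symE.
case: (qm_prod_e qmB ix) => [[j Fj]|Vw].
  rewrite -Ew in Fj; left; exists j; split => //.
  apply/adjacent_connected/(adjacent_syms (rho := tperm ord0 p) (sym := sym)).
    by rewrite tpermL.
  exact: amap_all_basis.
rewrite -Ew in Vw; right; split => // r; exists (ix r); split => //.
case: (eqVneq r p) => [->|rp]; first by move: (symE p); rewrite sp => -[->]; apply: connected_refl.
have [rho [rho0 rho1]] := exists_perm2 rp.
apply/adjacent_connected/(adjacent_symsV (rho := rho) (sym := sym)); first by rewrite rho0.
  by rewrite rho1.
exact: amap_all_basis.
Qed.

Lemma matches_connected (sym : 'I_n -> option I) w p q a b : matches sym w ->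
  sym p = Some a -> sym q = Some b -> prod w != 0 -> connected a b.
Proof.
move=> Hw sp sq nz.
case: (prod_basic_cases Hw sp nz) => [[j [aj Fj]]|[_ Hall]]; last first.
  by have [l [+ al]] := Hall q; rewrite sq => -[->].
case: (prod_basic_cases Hw sq nz) => [[j' [bj' Fj']]|[Vw _]].
  by rewrite (Fe_inj qmB Fj Fj' nz) in aj; apply: connected_trans aj (connected_sym bj').
by move: nz; rewrite (Fe_V_eq0 qmB Fj Vw) eqxx.
Qed.

Lemma prod_e_disconnected (t : 'I_n -> L) p q a b : p != q ->
  t p = e a -> t q = e b -> ~ connected a b -> prod t = 0.
Proof.
move=> pq tp tq nab.
pose S0 r := if r == p then Some a else if r == q then Some b else None.
have S0p : S0 p = Some a by rewrite /S0 eqxx.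
have S0q : S0 q = Some b by rewrite /S0 eq_sym (negbTE pq) eqxx.
apply: (prod_lspan_ind prod_multilinear (S := slot_set e V S0) (subspace_eq0 L)); last first.
  by apply: (lspan_slot_set qmB) => r l; rewrite /S0; do 2?[case: eqP => [-> [<-] //|_]].
move=> w /matches_slot_set [sym Hw Hsym]; case: (eqVneq (prod w) 0) => // nz.
by case: nab; apply: matches_connected Hw (Hsym _ _ S0p) (Hsym _ _ S0q) nz.
Qed.

Lemma Jcl_prod_e (C : I -> Prop) (t : 'I_n -> L) p a :
  (forall b c, C b -> connected b c -> C c) -> t p = e a -> C a -> Jcl prod e V C (prod t).
Proof.
move=> closedC tp Ca.
pose S0 r := if r == p then Some a else None.
have S0p : S0 p = Some a by rewrite /S0 eqxx.
apply: (prod_lspan_ind prod_multilinear (S := slot_set e V S0) (subspace_Jcl qmB C)); last first.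
  by apply: (lspan_slot_set qmB) => r l; rewrite /S0; case: eqP => [-> [<-]|].
move=> w /matches_slot_set [sym Hw Hsym].
case: (eqVneq (prod w) 0) => [->|nz]; first exact: subspace0 (subspace_Jcl qmB C).
case: (prod_basic_cases Hw (Hsym _ _ S0p) nz) => [[j [aj [c ->]]]|[Vw /fin_all_exists [ix Hix]]].
  apply/(Wcl_Jcl qmB)/(subspaceZ _ (subspace_lspan _))/mem_lspan.
  by exists j; split => //; apply: closedC aj.
apply: Vcl_Jcl; split => //; apply: mem_lspan; exists ix; split=> [r|].
  by case: (Hix r) => _; apply: closedC.
by congr prod; apply: functional_extensionality => r; have := Hw r; case: (Hix r) => ->.
Qed.

End Connections.

Lemma nth_insert_at (T : Type) (d z : T) (s : seq T) k : (k <= size s)%N ->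
  nth d (take k s ++ z :: drop k s) k = z.
Proof. by move=> ks; rewrite nth_cat size_takel // ltnn subnn. Qed.

Lemma nth_insert_bump (T : Type) (d z : T) (s : seq T) k b : (k <= size s)%N ->
  nth d (take k s ++ z :: drop k s) (bump k b) = nth d s b.
Proof.
move=> ks; rewrite /bump; case: (leqP k b) => [kb|bk]; rewrite nth_cat size_takel //.
  by rewrite add1n ltnNge (leq_trans kb (leqnSn b)) /= subSn //= nth_drop subnKC.
by rewrite add0n bk nth_take.
Qed.

Lemma nth_set_at (T : Type) (d z : T) (s : seq T) i r : (i < size s)%N ->
  nth d (take i s ++ z :: drop i.+1 s) r = if r == i then z else nth d s r.
Proof. by move=> is_; have := set_nthE s d i z; rewrite is_ => <-; rewrite nth_set_nth. Qed.

Lemma nth_insert_lift (T : Type) (d : T) (n : nat) (t : 'I_n -> T) (q r : 'I_n) :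
  nth d (take q [seq t (lift q b) | b <- enum 'I_n.-1] ++
         t q :: drop q [seq t (lift q b) | b <- enum 'I_n.-1]) r = t r.
Proof.
have qn : (q <= size [seq t (lift q b) | b <- enum 'I_n.-1])%N.
  by rewrite size_map size_enum_ord; have := ltn_ord q; lia.
case: (unliftP q r) => [b ->|->]; last exact: nth_insert_at.
by rewrite nth_insert_bump // nth_map_enum.
Qed.

Section ColorGLtIdentity.
Variables (F : fieldType) (G : zmodType) (L : lmodType F) (n : nat).
Variables (Lg : G -> L -> Prop) (prod : ('I_n -> L) -> L) (eps : G -> G -> F).
Hypothesis gLt : color_gLt Lg prod eps.

Lemma gLt_multilinear : multilinear prod.
Proof. by case: gLt => [[_ []]]. Qed.

Lemma gLt_prod_homogeneous (g : 'I_n -> G) (x : 'I_n -> L) :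
  (forall r, Lg (g r) (x r)) -> Lg (\sum_(r < n) g r) (prod x).
Proof. by case: gLt => [[_ [_ H]]] _; apply: H. Qed.

Lemma gLt_graded_space : graded_space Lg.
Proof. by case: gLt => [[]]. Qed.

(* A term of the color gLt identity for [prod t] with [t q = prod x]. *)
Lemma gLt_term (x t : 'I_n -> L) (q i j : 'I_n) (s1 : 'S_n) (s2 : 'S_n.-1) :
  let xs := [seq x (s1 a) | a <- enum 'I_n] in
  let ys := [seq t (lift q (s2 b)) | b <- enum 'I_n.-1] in
  let w := fun r : 'I_n => nth 0 (take j ys ++ xs`_i :: drop j ys) r in
  let u := fun r : 'I_n => nth 0 (take i xs ++ prod w :: drop i.+1 xs) r in
  [/\ u i = prod w, w j = x (s1 i), forall r, r != i -> u r = x (s1 r)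
    & forall r', r' != q -> exists2 r, r != j & w r = t r'].
Proof.
move=> xs ys w u.
have sxs : size xs = n by rewrite size_map size_enum_ord.
have jys : (j <= size ys)%N by rewrite size_map size_enum_ord; have := ltn_ord j; lia.
have ixs : (i < size xs)%N by rewrite sxs.
split=> [|||r' r'q].
- by rewrite /u nth_set_at // eqxx.
- by rewrite /w nth_insert_at // /xs nth_map_enum.
- by move=> r ri; rewrite /u nth_set_at // (negbTE ri : (val r == val i) = false) /xs nth_map_enum.
have [b Eb] : exists b, r' = lift q b.
  by case: (unliftP q r') r'q => [b ->|->]; [exists b | rewrite eqxx].
exists (lift j ((s2^-1)%g b)); first by rewrite eq_sym neq_lift.
by rewrite /w nth_insert_bump // /ys nth_map_enum permKV Eb.
Qed.

Lemma gLt_nested_ind (P : L -> Prop) (x t : 'I_n -> L) (q : 'I_n) :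
  subspace P -> (forall a, homogeneous Lg (x a)) ->
  (forall r, r != q -> homogeneous Lg (t r)) -> t q = prod x ->
  (forall (u w : 'I_n -> L) (i j a : 'I_n), u i = prod w -> w j = x a ->
     (forall r, r != i -> exists b, u r = x b) ->
     (forall r', r' != q -> exists2 r, r != j & w r = t r') -> P (prod u)) ->
  P (prod t).
Proof.
move=> sP hx ht tq Pu; have [_ [alpha gLt_id]] := gLt.
have [gx Hgx] := fin_all_exists hx.
have hy (b : 'I_n.-1) : homogeneous Lg (t (lift q b)) by apply: ht; rewrite eq_sym neq_lift.
have [gy Hgy] := fin_all_exists hy.
have := gLt_id q gx gy x (fun b => t (lift q b)) Hgx Hgy; cbv beta zeta.
have -> : prodS prod [seq x a | a <- enum 'I_n] = prod x.
  by congr prod; apply: functional_extensionality => r; rewrite nth_map_enum.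
rewrite -tq /prodS; under [X in prod X]functional_extensionality => r do rewrite nth_insert_lift.
move=> ->; apply: subspace_sum => // i _; apply: subspace_sum => // j _.
apply: subspace_sum => // s1 _; apply: subspace_sum => // s2 _; apply: subspaceZ => //.
have [ui wj uE wE] := gLt_term x t q i j s1 s2.
by apply: Pu ui wj _ wE => r ri; exists (s1 r); apply: uE.
Qed.

End ColorGLtIdentity.

Section HomogeneousComponents.
Variables (F : fieldType) (G : zmodType) (L : lmodType F) (Lg : G -> L -> Prop).
Hypothesis Lg_graded : graded_space Lg.

Lemma subspace_Lg g : subspace (Lg g).
Proof. by case: Lg_graded => H _; apply: H. Qed.

Definition hsum (S : L -> Prop) (x : L) : Prop :=
  exists k (gs : 'I_k -> G) (xs : 'I_k -> L),
    (forall j, S (xs j) /\ Lg (gs j) (xs j)) /\ x = \sum_(j < k) xs j.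

Lemma hsum0 S : hsum S 0.
Proof. by exists 0%N, (fun _ => 0), (fun _ => 0); rewrite big_ord0; split => [[]|]. Qed.

Lemma hsumD S x y : hsum S x -> hsum S y -> hsum S (x + y).
Proof.
move=> [k1 [g1 [x1 [H1 ->]]]] [k2 [g2 [x2 [H2 ->]]]].
exists (k1 + k2)%N,
  (fun k => match split k with inl i => g1 i | inr j => g2 j end),
  (fun k => match split k with inl i => x1 i | inr j => x2 j end).
split; first by move=> k; case: (split k).
rewrite big_split_ord /=; congr (_ + _); apply: eq_bigr => i _.
  by rewrite (unsplitK (inl i) : split (lshift k2 i) = inl i).
by rewrite (unsplitK (inr i) : split (rshift k1 i) = inr i).
Qed.

Lemma hsumS S S' x : lsubset S S' -> hsum S x -> hsum S' x.
Proof.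
move=> SS' [k [gs [xs [Hxs ->]]]]; exists k, gs, xs; split => // j.
by have [Sj Lj] := Hxs j; split => //; apply: SS'.
Qed.

Lemma hsum1 S g x : S x -> Lg g x -> hsum S x.
Proof. by move=> Sx Lx; exists 1%N, (fun _ => g), (fun _ => x); rewrite big_ord1. Qed.

Lemma hsum_sum S k (xs : 'I_k -> L) (gs : 'I_k -> G) :
  (forall j, S (xs j) /\ Lg (gs j) (xs j)) -> hsum S (\sum_(j < k) xs j).
Proof. by move=> Hxs; exists k, gs, xs. Qed.

Definition component k (gs : 'I_k -> G) (xs : 'I_k -> L) (g : G) : L :=
  \sum_(j | gs j == g) xs j.

Lemma sum_components k (gs : 'I_k -> G) (xs : 'I_k -> L) (D : seq G) :
  uniq D -> (forall j, gs j \in D) -> \sum_(d <- D) component gs xs d = \sum_j xs j.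
Proof.
move=> uD gsD; rewrite /component; under eq_bigr => d _ do rewrite big_mkcond.
rewrite exchange_big /=; apply: eq_bigr => j _.
rewrite (bigD1_seq (gs j)) //= eqxx big1 ?addr0 // => d dj.
by rewrite eq_sym (negbTE dj).
Qed.

Lemma component_homogeneous k (gs : 'I_k -> G) (xs : 'I_k -> L) g :
  (forall j, Lg (gs j) (xs j)) -> Lg g (component gs xs g).
Proof. by move=> Hxs; apply: subspace_sum => [|j /eqP <-]; [apply: subspace_Lg |]. Qed.

Lemma graded_sum_eq0 (D : seq G) (c : G -> L) : uniq D -> (forall d, Lg d (c d)) ->
  \sum_(d <- D) c d = 0 -> forall d, d \in D -> c d = 0.
Proof.
move=> uD Lc sum0 d dD; have [_ [_ indep]] := Lg_graded.
have inj : injective (fun k : 'I_(size D) => nth 0 D k).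
  by move=> a b /eqP; rewrite nth_uniq ?ltn_ord // => /eqP /val_inj.
rewrite (big_nth 0) big_mkord in sum0.
have dD' : (index d D < size D)%N by rewrite index_mem.
have := indep _ _ (fun k => c (nth 0 D k)) inj (fun k => Lc _) sum0 (Ordinal dD').
by rewrite /= nth_index.
Qed.

Lemma component_unique k1 (gs1 : 'I_k1 -> G) (xs1 : 'I_k1 -> L)
    k2 (gs2 : 'I_k2 -> G) (xs2 : 'I_k2 -> L) :
  (forall j, Lg (gs1 j) (xs1 j)) -> (forall j, Lg (gs2 j) (xs2 j)) ->
  \sum_j xs1 j = \sum_j xs2 j -> forall g, component gs1 xs1 g = component gs2 xs2 g.
Proof.
move=> H1 H2 E g.
pose D := undup ([seq gs1 j | j <- enum 'I_k1] ++ [seq gs2 j | j <- enum 'I_k2]).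
have D1 j : gs1 j \in D by rewrite mem_undup mem_cat map_f ?mem_enum.
have D2 j : gs2 j \in D by rewrite mem_undup mem_cat map_f ?mem_enum ?orbT.
case: (boolP (g \in D)) => gD; last first.
  by rewrite /component !big1 // => j /eqP gj; case/negP: gD; rewrite -gj.
apply/eqP; rewrite -subr_eq0; apply/eqP; move: g gD; apply: graded_sum_eq0 (undup_uniq _) _ _.
  by move=> d; apply: subspaceB; [apply: subspace_Lg | apply: component_homogeneous ..].
by rewrite sumrB !sum_components ?undup_uniq // E subrr.
Qed.

Lemma hsum_components S k (gs : 'I_k -> G) (xs : 'I_k -> L) :
  (forall j, Lg (gs j) (xs j)) -> (forall g, S (component gs xs g)) -> hsum S (\sum_j xs j).
Proof.
move=> Hxs Sc; pose D := undup [seq gs j | j <- enum 'I_k].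
have gsD j : gs j \in D by rewrite mem_undup map_f ?mem_enum.
rewrite -(sum_components xs (undup_uniq _) gsD) (big_nth 0) big_mkord.
apply: (hsum_sum (gs := fun i : 'I_(size D) => nth 0 D i)) => i.
by split; last apply: component_homogeneous.
Qed.

End HomogeneousComponents.

Section ClassSubspaces.
Variables (F : fieldType) (G : zmodType) (L : lmodType F) (n : nat).
Variables (Lg : G -> L -> Prop) (prod : ('I_n -> L) -> L) (eps : G -> G -> F).
Variables (I : Type) (e : I -> L) (V W : L -> Prop).
Hypothesis gLt : color_gLt Lg prod eps.
Hypothesis qmB : qm_basis Lg prod e V W.

Local Notation connected := (connected prod e V).
Let Lg_graded : graded_space Lg := gLt_graded_space gLt.

Definition basis_in (C : I -> Prop) (z : L) : Prop := exists j, C j /\ z = e j.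

Definition prod_basis_in (C : I -> Prop) (z : L) : Prop :=
  exists ix : 'I_n -> I, (forall r, C (ix r)) /\ z = prod (fun r => e (ix r)).

Lemma lspan_Jcl C x : Jcl prod e V C x -> lspan (fun z => basis_in C z \/ prod_basis_in C z) x.
Proof.
move=> [v [w [[Sv _] [Sw ->]]]]; apply: subspaceD; first exact: subspace_lspan.
  by apply: lspanS Sv => z; right.
by apply: lspanS Sw => z; left.
Qed.

Lemma prod_basis_homogeneous C z : prod_basis_in C z -> homogeneous Lg z.
Proof.
move=> [ix [_ ->]]; have [g Hg] := fin_all_exists (fun r => qm_e_homogeneous qmB (ix r)).
by exists (\sum_(r < n) g r); apply: gLt_prod_homogeneous gLt _ _ Hg.
Qed.

Lemma Vcl_graded C : graded_sub Lg (Vcl prod e V C).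
Proof.
split=> [|x [Sx Vx]]; first exact: subspace_Vcl qmB C.
have [_ /(_ x Vx) [k1 [gs1 [xs1 [H1 Ex1]]]]] := qm_V_graded qmB.
have [k2 [c [v [Hv Ex2]]]] := Sx.
have [gv Hgv] := fin_all_exists (fun j => prod_basis_homogeneous (Hv j)).
have L1 j : Lg (gs1 j) (xs1 j) by case: (H1 j).
have L2 j : Lg (gv j) (c j *: v j) by apply: subspaceZ (Hgv j); apply: (subspace_Lg Lg_graded).
rewrite Ex1; apply: (hsum_components Lg_graded L1) => g; split.
  rewrite (component_unique Lg_graded L1 L2 (etrans (esym Ex1) Ex2)).
  apply: subspace_sum => [|j _]; first exact: subspace_lspan.
  by apply: subspaceZ; [apply: subspace_lspan | apply: mem_lspan].
by apply: subspace_sum => [|j _]; [apply: qm_V_subspace qmB | case: (H1 j)].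
Qed.

Lemma Wcl_graded C : graded_sub Lg (Wcl e C).
Proof.
split=> [|_ [k [c [v [Hv ->]]]]]; first exact: subspace_lspan.
apply: (big_ind (hsum Lg _)) => [|x y|j _]; [exact: hsum0 | exact: hsumD |].
have [l [Cl ->]] := Hv j; have [g Hg] := qm_e_homogeneous qmB l.
apply: (hsum1 (g := g)).
  by apply: subspaceZ; [apply: subspace_lspan | apply: mem_lspan; exists l].
by apply: subspaceZ => //; apply: (subspace_Lg Lg_graded).
Qed.

Lemma Jcl_graded C : graded_sub Lg (Jcl prod e V C).
Proof.
split=> [|_ [v [w [Vv [Ww ->]]]]]; first exact: subspace_Jcl qmB C.
apply: hsumD; first by apply: hsumS ((Vcl_graded C).2 v Vv) => z; apply: Vcl_Jcl.
by apply: hsumS ((Wcl_graded C).2 w Ww) => z; apply: (Wcl_Jcl qmB).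
Qed.

Lemma Jcl_inherited_qm_basis (C : I -> Prop) i : C i ->
  inherited_qm_basis Lg e V W (Jcl prod e V C).
Proof.
move=> Ci; exists (Vcl prod e V C), (Wcl e C), C.
have [_ [free _]] := qm_e_basis qmB.
split; first exact: Vcl_graded.
split; first by move=> x [].
split; first exact: Wcl_graded.
split; first by move=> x; apply: (Wcl_W qmB).
split; first by exists (e i); split; [apply: mem_lspan; exists i | apply: (e_neq0 qmB)].
split; first split=> [j Cj|]; first by apply: mem_lspan; exists j.
  by split=> [k f c fi _|//]; apply: free fi (fun _ => Logic.I).
split=> [x [_ Vx] Wx|//]; exact: (VW_eq0 qmB Vx (Wcl_W qmB Wx)).
Qed.

Lemma classes_direct_sum (U : L -> Prop) : subspace U ->
  direct_sum V U (lspan (fun x => exists i, Vcl prod e V (connected i) x)) ->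
  direct_sum (fun _ => True) U (lspan (fun x => exists i, Jcl prod e V (connected i) x)).
Proof.
move=> sU dsU; have sV := qm_V_subspace qmB; have sW := qm_W_subspace qmB.
move: (direct_sum_addsp sV sU (subspace_lspan _) (qm_direct_sum qmB) dsU).
apply: direct_sum_ext => x.
split=> [[s [w [SVs [Ww ->]]]]|].
  apply: subspaceD; first exact: subspace_lspan.
    by apply: lspanS SVs => z [i Vi]; exists i; apply: Vcl_Jcl.
  apply: lspanS (W_lspan_e qmB Ww) => _ [l ->]; exists l; apply: (Wcl_Jcl qmB).
  by apply: mem_lspan; exists l; split => //; apply: connected_refl.
apply: (lspan_min (subspace_addsp (subspace_lspan _) sW)) => _ [i [v [w [Vv [Ww ->]]]]].
by exists v, w; split; [apply: mem_lspan; exists i | split => //; apply: (Wcl_W qmB Ww)].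
Qed.

End ClassSubspaces.

Section ClassIdeals.
Variables (F : fieldType) (G : zmodType) (L : lmodType F) (m : nat).
Local Notation n := m.+2.
Variables (Lg : G -> L -> Prop) (prod : ('I_n -> L) -> L) (eps : G -> G -> F).
Variables (I : Type) (e : I -> L) (V W : L -> Prop).
Hypothesis gLt : color_gLt Lg prod eps.
Hypothesis qmB : qm_basis Lg prod e V W.

Local Notation connected := (connected prod e V).
Local Notation Jcl := (Jcl prod e V).
Local Notation basis_in := (basis_in e).
Local Notation prod_basis_in := (prod_basis_in prod e).
Let prod_ml : multilinear prod := gLt_multilinear gLt.

Lemma Jcl_ideal (C : I -> Prop) (s : 'S_n) :
  (forall a b, C a -> connected a b -> C b) ->
  lsubset (bracket prod s (argsL (Jcl C))) (Jcl C).
Proof.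
move=> closedC; apply: (lspan_min (subspace_Jcl qmB C)) => _ [x [Jx ->]].
pose p := (s^-1)%g ord0.
pose S r := if r == p then (fun z => basis_in C z \/ prod_basis_in C z) else hbasic Lg e V.
apply: (prod_lspan_ind prod_ml (S := S) (subspace_Jcl qmB C)) => [t St|r]; last first.
  rewrite /S; case: eqP => [->|_]; last exact: (lspan_hbasic qmB).
  by apply: (lspan_Jcl (V := V)); rewrite /p permKV; apply: (Jx ord0).
have := St p; rewrite /S eqxx => -[[a [Ca tp]]|[ix [Cix tp]]].
  exact: (Jcl_prod_e prod_ml qmB closedC tp Ca).
apply: (gLt_nested_ind gLt (subspace_Jcl qmB C) _ _ tp) => [a|r rp|u w i j a _ _ uE _].
    exact: (qm_e_homogeneous qmB).
  by have := St r; rewrite /S (negbTE rp) => -[].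
have [r ri] : exists r : 'I_n, r != i.
  exists (if i == ord0 then slot1 m else ord0).
  by case: (eqVneq i ord0) => [->//|ni0]; rewrite eq_sym.
have [b ub] := uE r ri; exact: (Jcl_prod_e prod_ml qmB closedC ub (Cix b)).
Qed.

Lemma prod_e_prod_basis_eq0 (t : 'I_n -> L) p q a (D : I -> Prop) : p != q ->
  t p = e a -> lspan (prod_basis_in D) (t q) -> (forall d, D d -> ~ connected a d) ->
  prod t = 0.
Proof.
move=> pq tp tq nD.
pose S r := if r == p then (fun z => z = e a)
  else if r == q then prod_basis_in D else hbasic Lg e V.
apply: (prod_lspan_ind prod_ml (S := S) (subspace_eq0 L)) => [t' St'|r]; last first.
  rewrite /S; case: eqP => [->|_]; first exact: mem_lspan.
  by case: eqP => [->//|_]; exact: (lspan_hbasic qmB).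
have := St' q; rewrite /S eq_sym (negbTE pq) eqxx => -[ix [Dix tq']].
have tp' : t' p = e a by have := St' p; rewrite /S eqxx.
apply: (gLt_nested_ind gLt (subspace_eq0 L) _ _ tq') => [b|r rq|u w i j b ui wj _ wt].
    exact: (qm_e_homogeneous qmB).
  have := St' r; rewrite /S (negbTE rq).
  by case: eqP => [_ ->|_ []//]; apply: (qm_e_homogeneous qmB).
have [r rj wr] := wt p pq; rewrite tp' in wr.
apply: (prod_eq0 prod_ml (i := i)); rewrite ui.
by apply: (prod_e_disconnected prod_ml qmB rj wr wj); apply: nD.
Qed.

Lemma prod_basis_pair_eq0 (t : 'I_n -> L) p q (C D : I -> Prop) : p != q ->
  lspan (prod_basis_in C) (t p) -> lspan (prod_basis_in D) (t q) ->
  (forall c d, C c -> D d -> ~ connected c d) -> prod t = 0.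
Proof.
move=> pq tp tq nCD; have qp : q != p by rewrite eq_sym.
pose S r := if r == p then prod_basis_in C else if r == q then prod_basis_in D else hbasic Lg e V.
apply: (prod_lspan_ind prod_ml (S := S) (subspace_eq0 L)) => [t' St'|r]; last first.
  by rewrite /S; case: eqP => [->//|_]; case: eqP => [->//|_]; exact: (lspan_hbasic qmB).
have := St' p; rewrite /S eqxx => -[ix [Cix tp']].
apply: (gLt_nested_ind gLt (subspace_eq0 L) _ _ tp') => [b|r rp|u w i j b ui wj _ wt].
    exact: (qm_e_homogeneous qmB).
  have := St' r; rewrite /S (negbTE rp).
  by case: eqP => [_|_ []//]; apply: (prod_basis_homogeneous gLt qmB).
have [r rj wr] := wt q qp.
apply: (prod_eq0 prod_ml (i := i)); rewrite ui.
apply: (prod_e_prod_basis_eq0 (p := j) (q := r) (a := ix b) (D := D)) => [|||d Dd].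
- by rewrite eq_sym.
- exact: wj.
- by rewrite wr; apply: mem_lspan; have := St' q; rewrite /S (negbTE qp) eqxx.
- exact: nCD.
Qed.

Lemma Jcl_orthogonal (i h : I) (s : 'S_n) :
  ~ (forall j, connected i j <-> connected h j) ->
  lsubset (bracket prod s (args2 (Jcl (connected i)) (Jcl (connected h)))) (fun x => x = 0).
Proof.
move=> /(connected_classes_disjoint qmB) nc.
apply: (lspan_min (subspace_eq0 L)) => _ [x [Jx ->]].
pose p := (s^-1)%g ord0; pose q := (s^-1)%g (slot1 m).
have pq : p != q by rewrite (inj_eq perm_inj).
have qp : q != p by rewrite eq_sym.
pose S r := if r == p then (fun z => basis_in (connected i) z \/ prod_basis_in (connected i) z)
  else if r == q then (fun z => basis_in (connected h) z \/ prod_basis_in (connected h) z)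
  else (fun _ => True).
apply: (prod_lspan_ind prod_ml (S := S) (subspace_eq0 L)) => [t St|r]; last first.
  rewrite /S; case: eqP => [->|_].
    by apply: (lspan_Jcl (V := V)); rewrite /p permKV; apply: (Jx ord0).
  case: eqP => [->|_]; last exact: mem_lspan.
  by apply: (lspan_Jcl (V := V)); rewrite /q permKV; apply: (Jx (slot1 m)).
have := St p; rewrite /S eqxx => Sp.
have := St q; rewrite /S (negbTE qp) eqxx => Sq.
case: Sp => [[a [ia tp]]|[ix [iix tp]]]; case: Sq => [[b [hb tq]]|[iy [hiy tq]]].
- exact: (prod_e_disconnected prod_ml qmB pq tp tq (nc _ _ ia hb)).
- apply: (prod_e_prod_basis_eq0 pq tp (D := connected h)) => [|d]; last exact: nc.
  by rewrite tq; apply: mem_lspan; exists iy.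
- apply: (prod_e_prod_basis_eq0 qp tq (D := connected i)) => [|d id bd].
    by rewrite tp; apply: mem_lspan; exists ix.
  by apply: (nc d b id hb); apply: (connected_sym qmB bd).
- apply: (prod_basis_pair_eq0 pq (C := connected i) (D := connected h)); last exact: nc.
    by rewrite tp; apply: mem_lspan; exists ix.
  by rewrite tq; apply: mem_lspan; exists iy.
Qed.

End ClassIdeals.

Theorem theorem3p12 (F : fieldType) (G : zmodType) (L : lmodType F) (n : nat)
  (Lg : G -> L -> Prop) (prod : ('I_n -> L) -> L) (eps : G -> G -> F)
  (V W : L -> Prop) (I : Type) (e : I -> L) :
  (2 <= n)%N ->
  bicharacter eps ->
  color_gLt Lg prod eps ->
  qm_basis Lg prod e V W ->
  (* sum over the classes [i] of the V_[i], and of the J_[i] *)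
  let SV := lspan (fun x => exists i : I, Vcl prod e V (connected prod e V i) x) in
  let SJ := lspan (fun x => exists i : I, Jcl prod e V (connected prod e V i) x) in
  (forall U : L -> Prop,
     subspace U -> lsubset U V -> direct_sum V U SV ->
     direct_sum (fun _ => True) U SJ) /\
  (forall i : I,
     gLt_ideal Lg prod (Jcl prod e V (connected prod e V i)) /\
     inherited_qm_basis Lg e V W (Jcl prod e V (connected prod e V i))) /\
  (forall i h : I,
     ~ (forall j, connected prod e V i j <-> connected prod e V h j) ->
     forall s : 'S_n,
       lsubset (bracket prod s (args2 (Jcl prod e V (connected prod e V i))
                                     (Jcl prod e V (connected prod e V h))))
              (fun x => x = 0)).
Proof.
case: n prod => [|[|m]] // prod _ _ gLt qmB SV SJ.
have closed_class i a b :
    connected prod e V i a -> connected prod e V a b -> connected prod e V i b.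
  exact: connected_trans.
split; [|split].
- by move=> U sU _; apply: (classes_direct_sum qmB).
- move=> i; split; last exact: (Jcl_inherited_qm_basis gLt qmB (connected_refl prod e V i)).
  split; [exact: (Jcl_graded gLt qmB) | move=> s; exact: (Jcl_ideal gLt qmB (closed_class i))].
- by move=> i h ih s; apply: (Jcl_orthogonal gLt qmB ih).
Qed.
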